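(* Let $\Gamma$ be a set of clauses with designated blocking variables, containing a clause $C\lor b$ where $b$ is a blocking variable and this clause is the unique occurrence of $b$ in $\Gamma$. Write $C=\ell_1\lor\dots\lor\ell_t$. Then the clauses $D_i=\lnot\ell_i\lor\lnot b$, $i=1,\dots,t$, can be introduced one by one by the cost-LPR rule, i.e. for each $i$, $D_i$ is cost-LPR w.r.t. $\Gamma\cup\{D_1,\dots,D_{i-1}\}$. (Thus $b$ becomes equivalent to $\lnot C$.)
   Context: Substitutions map variables to $0$, $1$ or literals; a partial assignment has $\sigma(x)\in\{0,1,x\}$ with domain $\sigma^{-1}(\{0,1\})$; $(\sigma\circ\tau)(x)=\sigma(\tau(x))$; total means all variables assigned. $C{\upharpoonright}_\sigma$: apply $\sigma$ to the literals and simplify; $\Gamma{\upharpoonright}_\sigma$ is the multiset of $C{\upharpoonright}_\sigma\ne1$, $C\in\Gamma$. $\lnot E$ is the partial assignment falsifying all literals of $E$. $\Gamma\vdash_1 E$ means unit propagation on $\Gamma{\upharpoonright}_{\lnot E}$ derives the empty clause; $\Gamma\vdash_1\Delta$ means this for all members of $\Delta$. $\mathrm{cost}(\alpha)=\sum_i\alpha(b_i)$ over blocking variables. A clause $E$ is cost-LPR w.r.t. $\Gamma$ if there is a partial assignment $\sigma$ with the same domain as $\lnot E$, differing from $\lnot E$ on exactly one variable, such that (1) $\Gamma{\upharpoonright}_{\lnot E}\vdash_1(\Gamma\cup\{E\}){\upharpoonright}_\sigma$ and (2) $\mathrm{cost}(\tau\circ\sigma)\le\mathrm{cost}(\tau)$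 for all total $\tau\supseteq\lnot E$. *)

From mathcomp Require Import all_boot.
Set Implicit Arguments. Unset Strict Implicit. Unset Printing Implicit Defensive.

(* Variables are natural numbers.  A literal is a pair (v, pol):
   (v, true) is the positive literal v, (v, false) is the negative literal ~v. *)
Definition var := nat.
Definition lit := (var * bool)%type.
Definition neg_lit (l : lit) : lit := (l.1, ~~ l.2).

(* A clause is a disjunction of literals (list; order/duplicates irrelevant).
   A CNF Gamma is a multiset (list) of clauses. *)
Definition clause := seq lit.
Definition cnf := seq clause.

Definition nontaut (c : clause) : Prop :=
  forall v : var, ~~ (((v, true) \in c) && ((v, false) \in c)).

(* Partial assignment: sigma v = Some b (v assigned b) or None (sigma(v) = v). *)
Definition pa := var -> option bool.
Definition tassign := var -> bool.

Definition lit_val (a : pa) (l : lit) : option bool :=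
  omap (fun b => b == l.2) (a l.1).

(* C|_sigma : None encodes the constant 1 (satisfied clause);
   otherwise the falsified literals are removed. *)
Definition restr_clause (a : pa) (c : clause) : option clause :=
  if has (fun l => lit_val a l == Some true) c then None
  else Some [seq l <- c | lit_val a l != Some false].

Definition restr_cnf (a : pa) (G : cnf) : cnf := pmap (restr_clause a) G.

(* ~E : the partial assignment falsifying all literals of E
   (meaningful for non-tautological E) *)
Definition neg_clause (E : clause) : pa :=
  fun v => if (v, true) \in E then Some false
           else if (v, false) \in E then Some true else None.

Definition assign_lit (l : lit) : pa :=
  fun v => if v == l.1 then Some l.2 else None.

Definition is_unit (c : clause) (l : lit) : bool := undup c == [:: l].

Inductive up_refutes : cnf -> Prop :=
| upr_empty (G : cnf) : [::] \in G -> up_refutes G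
| upr_unit (G : cnf) (c : clause) (l : lit) :
    c \in G -> is_unit c l -> up_refutes (restr_cnf (assign_lit l) G) ->
    up_refutes G.

Definition derives1 (G : cnf) (E : clause) : Prop :=
  up_refutes (restr_cnf (neg_clause E) G).

Definition comp_assign (t : tassign) (s : pa) : tassign :=
  fun v => match s v with Some b => b | None => t v end.

Definition cost (B : seq var) (a : tassign) : nat := \sum_(x <- B) (a x : nat).

Definition cost_LPR (B : seq var) (G : cnf) (E : clause) : Prop :=
  exists s : pa,
    (forall v, (s v == None) = (neg_clause E v == None)) /\
    (exists v, s v <> neg_clause E v /\
               forall w, s w <> neg_clause E w -> w = v) /\
    (forall E', E' \in restr_cnf s (E :: G) ->
                derives1 (restr_cnf (neg_clause E) G) E') /\
    (forall t : tassign,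
        (forall v b, neg_clause E v = Some b -> t v = b) ->
        cost B (comp_assign t s) <= cost B t).

From mathcomp Require Import all_boot.
Set Implicit Arguments. Unset Strict Implicit. Unset Printing Implicit Defensive.

(* ~D_i makes l_i and b true; the witness sigma keeps l_i true but flips b
   to false.  Then sigma satisfies D_i, the earlier D_j and C \/ b, while every
   other clause of Gamma avoids b, so sigma restricts it exactly as ~D_i does:
   its restriction is itself a clause of Gamma|~D_i, which unit propagation
   refutes at once.  Turning b from 1 to 0 cannot raise the cost, whether or
   not b is blocking. *)

Lemma restr_clause_eq_in (a1 a2 : pa) (c : clause) :
  (forall l, l \in c -> a1 l.1 = a2 l.1) ->
  restr_clause a1 c = restr_clause a2 c.
Proof.
move=> a12; rewrite /restr_clause /lit_val.
rewrite (eq_in_has (a2 := fun l => omap (eq_op^~ l.2) (a2 l.1) == Some true));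
  last by move=> l /a12 ->.
by rewrite (eq_in_filter (a2 := fun l => omap (eq_op^~ l.2) (a2 l.1) != Some false))
  // => l /a12 ->.
Qed.

Lemma restr_clause_sat (a : pa) (c : clause) (l : lit) :
  l \in c -> lit_val a l = Some true -> restr_clause a c = None.
Proof.
move=> cl al; rewrite /restr_clause; case: ifP => // /negbT/hasPn/(_ l cl).
by rewrite al.
Qed.

Lemma restr_clause_sub (a : pa) (c c' : clause) :
  restr_clause a c = Some c' -> {subset c' <= c}.
Proof.
by rewrite /restr_clause; case: ifP => // _ [<-] l; rewrite mem_filter => /andP[].
Qed.

Lemma nontaut_sub (c c' : clause) : {subset c' <= c} -> nontaut c -> nontaut c'.
Proof.
move=> c'c ntc v; apply/negP => /andP[/c'c vt /c'c vf].
by move: (ntc v); rewrite vt vf.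
Qed.

Lemma lit_val_neg_clause (c : clause) (l : lit) :
  nontaut c -> l \in c -> lit_val (neg_clause c) l = Some false.
Proof.
case: l => v [] ntc cl; rewrite /lit_val /neg_clause /=; first by rewrite cl.
have /negbTE -> : (v, true) \notin c by apply: contra (ntc v) => ->.
by rewrite cl.
Qed.

Lemma restr_clause_neg_self (c : clause) :
  nontaut c -> restr_clause (neg_clause c) c = Some [::].
Proof.
move=> ntc; have cF l : l \in c -> lit_val (neg_clause c) l = Some false.
  exact: lit_val_neg_clause.
rewrite /restr_clause (negbTE (introT hasPn _)) => [|l /cF -> //].
by rewrite -(filter_pred0 c); congr Some; apply: eq_in_filter => l /cF ->.
Qed.

Lemma derives1_mem (G : cnf) (E : clause) :
  E \in G -> nontaut E -> derives1 G E.
Proof.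
move=> GE ntE; apply: upr_empty.
by rewrite mem_pmap; apply/mapP; exists E; rewrite ?restr_clause_neg_self.
Qed.

Lemma derives1_restr_mem (a : pa) (G : cnf) (c E' : clause) :
  c \in G -> nontaut c -> restr_clause a c = Some E' ->
  derives1 (restr_cnf a G) E'.
Proof.
move=> Gc ntc acE'; apply: derives1_mem.
  by rewrite mem_pmap; apply/mapP; exists c.
exact: nontaut_sub (restr_clause_sub acE') ntc.
Qed.

Definition pa_flip (a : pa) (v : var) : pa :=
  fun w => if w == v then omap negb (a w) else a w.

Lemma pa_flip_None (a : pa) (v w : var) :
  (pa_flip a v w == None) = (a w == None).
Proof. by rewrite /pa_flip; case: (w =P v) => // _; case: (a w). Qed.

Lemma pa_flip_neq (a : pa) (v w : var) :
  a v <> None -> (pa_flip a v w <> a w <-> w = v).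
Proof.
rewrite /pa_flip; case: (w =P v) => [-> | _] //.
by case: (a v) => // x _; split=> // _ [] /eqP; rewrite eq_sym; case: x.
Qed.

Lemma restr_clause_flip_avoiding (a : pa) (v : var) (c : clause) :
  (forall l, l \in c -> l.1 != v) ->
  restr_clause (pa_flip a v) c = restr_clause a c.
Proof.
by move=> cv; apply: restr_clause_eq_in => l /cv /negbTE; rewrite /pa_flip => ->.
Qed.

Lemma cost_le (B : seq var) (t1 t2 : tassign) :
  (forall x, t1 x ==> t2 x) -> cost B t1 <= cost B t2.
Proof.
by move=> t12; apply: leq_sum => x _; move: (t12 x); case: (t1 x); case: (t2 x).
Qed.

Lemma cost_comp_flip_le (B : seq var) (a : pa) (v : var) (t : tassign) :
  a v = Some true -> (forall w x, a w = Some x -> t w = x) ->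
  cost B (comp_assign t (pa_flip a v)) <= cost B t.
Proof.
move=> av ta; apply: cost_le => w; rewrite /comp_assign /pa_flip.
case: eqP => [-> | _]; first by rewrite av.
by case aw: (a w) => [x|]; rewrite ?(ta _ _ aw) implybb.
Qed.

Lemma cost_LPR_flip (B : seq var) (G : cnf) (E : clause) (v : var) :
  neg_clause E v = Some true ->
  (forall E', E' \in restr_cnf (pa_flip (neg_clause E) v) (E :: G) ->
              derives1 (restr_cnf (neg_clause E) G) E') ->
  cost_LPR B G E.
Proof.
move=> Ev impl; exists (pa_flip (neg_clause E) v); split; first exact: pa_flip_None.
split; last by split=> // t; exact: cost_comp_flip_le.
have nEv : neg_clause E v <> None by rewrite Ev.
exists v; split=> [|w]; first exact: (pa_flip_neq v nEv).2 erefl.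
exact: (pa_flip_neq w nEv).1.
Qed.

Section BlockingClause.

Variables (l : lit) (b : var).
Hypothesis lb : l.1 != b.

Let D : clause := [:: neg_lit l; (b, false)].
Let sigma : pa := pa_flip (neg_clause D) b.

Lemma neg_blocking_clause_b : neg_clause D b = Some true.
Proof.
by rewrite /neg_clause !inE /neg_lit !xpair_eqE (eq_sym b) (negbTE lb) eqxx.
Qed.

Lemma restr_flip_satisfied (c : clause) :
  ((b, false) \in c) || (l \in c) -> restr_clause sigma c = None.
Proof.
case/orP=> cl; apply: (restr_clause_sat cl); rewrite /lit_val /sigma /pa_flip.
  by rewrite eqxx neg_blocking_clause_b.
rewrite (negbTE lb) /neg_clause !inE /neg_lit !xpair_eqE (negbTE lb) eqxx /=.
by case: l.2.
Qed.

End BlockingClause.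

Theorem lemma6p6 (B : seq var) (C : clause) (b : var) (Gamma' : cnf) :
  uniq B -> b \in B ->
  (* all clauses of Gamma = {C \/ b} + Gamma' are non-tautological *)
  (forall c, c \in rcons C (b, true) :: Gamma' -> nontaut c) ->
  (* C \/ b is the unique occurrence of the variable b in Gamma *)
  (forall l, l \in C -> l.1 != b) ->
  (forall c, c \in Gamma' -> forall l, l \in c -> l.1 != b) ->
  let Gamma := rcons C (b, true) :: Gamma' in
  let Ds := [seq [:: neg_lit l; (b, false)] | l <- C] in
  forall i, i < size C ->
    cost_LPR B (Gamma ++ take i Ds) (nth [::] Ds i).
Proof.
move=> _ _ ntG Cb G'b Gamma Ds i ltiC.
rewrite /Ds (nth_map (0, true)) //; set l := nth _ C i.
have Cl : l \in C by exact: mem_nth.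
apply: (cost_LPR_flip _ (neg_blocking_clause_b (Cb l Cl))) => E'.
rewrite mem_pmap => /mapP[c Gc cE'].
have [sat_c | G'c] : ((b, false) \in c) || (l \in c) \/ c \in Gamma'.
  move: Gc; rewrite inE mem_cat inE -orbA.
  case/or4P=> [/eqP-> | /eqP-> | G'c | /mem_take/mapP[l' _ ->]].
  - by left; rewrite !inE eqxx orbT.
  - by left; rewrite !mem_rcons !inE Cl !orbT.
  - by right.
  - by left; rewrite !inE eqxx orbT.
  by move: cE'; rewrite (restr_flip_satisfied (Cb l Cl) sat_c).
rewrite restr_clause_flip_avoiding in cE'; last exact: G'b.
apply: (derives1_restr_mem _ _ (esym cE')); first by rewrite mem_cat inE G'c orbT.
by apply: ntG; rewrite inE G'c orbT.
Qed.
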